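(* Let $X$ be a distance-regular graph of diameter $d\geq 2$ on $n$ vertices with degree $k$ and $\mu=c_2$. Let $\gamma,\delta>0$. If $k>\gamma n$ and $\mu\leq(1-\delta)k$, then $\mathrm{motion}(X)\geq\gamma\delta n$.
   Context: A connected graph $X$ of diameter $d$ is distance-regular if there are integers $a_i,b_i,c_i$ ($0\le i\le d$) such that for all vertices $v,w$ with $\mathrm{dist}(v,w)=i$, $w$ has exactly $c_i$ neighbours at distance $i-1$, $a_i$ at distance $i$, $b_i$ at distance $i+1$ from $v$; $X$ is $k$-regular with $k=b_0$, and $\mu=c_2$. The motion $\mathrm{motion}(X)$ is the minimum, over non-identity automorphisms of $X$, of the number of vertices not fixed by the automorphism. *)

From HB Require Import structures.
From mathcomp Require Import all_boot all_order all_algebra all_fingroup.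
Set Implicit Arguments. Unset Strict Implicit. Unset Printing Implicit Defensive.
Import Order.TTheory GRing.Theory Num.Theory.

Definition simple_graph (T : finType) (e : rel T) : Prop :=
  symmetric e /\ irreflexive e.

Definition connected_graph (T : finType) (e : rel T) : Prop :=
  forall x y : T, connect e x y.

Fixpoint ball (T : finType) (e : rel T) (k : nat) (x : T) : {set T} :=
  match k with
  | 0 => [set x]
  | k'.+1 => ball e k' x :|: [set z | [exists y in ball e k' x, e y z]]
  end.

(* graph distance: least k with y in ball k x (equals #|T| if unreachable) *)
Definition dist (T : finType) (e : rel T) (x y : T) : nat :=
  find (fun k => y \in ball e k x) (iota 0 #|T|).

Definition diameter (T : finType) (e : rel T) : nat :=
  \max_(v : T) \max_(w : T) dist e v w.

Definition distance_regular (T : finType) (e : rel T) (a b c : nat -> nat) : Prop :=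
  simple_graph e /\ connected_graph e /\
  forall v w : T,
    let i := dist e v w in
    [/\ #|[set u | e w u & (dist e v u).+1 == i]| = c i,
        #|[set u | e w u & dist e v u == i]| = a i &
        #|[set u | e w u & dist e v u == i.+1]| = b i].

Definition is_automorphism (T : finType) (e : rel T) (s : {perm T}) : Prop :=
  forall x y : T, e (s x) (s y) = e x y.

Definition moved (T : finType) (s : {perm T}) : nat := #|[set x | s x != x]|.

From mathcomp Require Import all_boot all_order all_algebra all_fingroup.
From mathcomp Require Import zify lra.
Import Order.TTheory GRing.Theory Num.Theory.

Set Implicit Arguments.
Unset Strict Implicit.
Unset Printing Implicit Defensive.

(* An automorphism s with s x <> x maps N(x) onto N(s x), so it moves every
   vertex of N(x) Δ N(s x).  In a distance-regular graph any two distinct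
   vertices x, y satisfy |N(x) Δ N(y)| >= k - mu: non-adjacent vertices have
   0 or mu common neighbours, and when x ~ y, diameter >= 2 yields a neighbour
   w of y at distance 2 from x; each of the a_1 common neighbours of y and w is
   a common neighbour of x and w or lies in N(y) \ N(x).  Finally
   k - mu >= delta k > gamma delta n. *)

Definition nbhd (T : finType) (e : rel T) (x : T) : {set T} := [set u | e x u].

Lemma in_nbhd (T : finType) (e : rel T) x u : (u \in nbhd e x) = e x u.
Proof. by rewrite inE. Qed.

Section Distance.
Variables (T : finType) (e : rel T).

Lemma in_ball1 x y : (y \in ball e 1 x) = (y == x) || e x y.
Proof.
rewrite /= !inE; congr (_ || _); apply/existsP/idP.
- by move=> [z /andP[]]; rewrite inE => /eqP ->.
- by move=> exy; exists x; rewrite inE eqxx.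
Qed.

Lemma in_ball2 x y u : u \in ball e 1 x -> e u y -> y \in ball e 2 x.
Proof.
move=> u_x euy; rewrite [ball e 2 x]/= !inE; apply/orP; right.
by apply/existsP; exists u; rewrite u_x.
Qed.

Lemma dist_eq x y i : (i < #|T|)%N -> y \in ball e i x ->
  (forall j, (j < i)%N -> y \notin ball e j x) -> dist e x y = i.
Proof.
move=> lt_iT y_i y_lt_i; rewrite /dist.
case: (ltngtP (find (fun k => y \in ball e k x) (iota 0 #|T|)) i) => // [lt_di | lt_id].
- have has_y : has (fun k => y \in ball e k x) (iota 0 #|T|).
    by rewrite has_find size_iota (ltn_trans lt_di).
  have := nth_find 0 has_y; rewrite nth_iota ?add0n ?(ltn_trans lt_di) //.
  by move: (y_lt_i _ lt_di) => /negP.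
- by have := before_find 0 lt_id; rewrite nth_iota // add0n y_i.
Qed.

Lemma dist_ball x y : (dist e x y < #|T|)%N -> y \in ball e (dist e x y) x.
Proof.
rewrite /dist => lt_dT.
have has_y : has (fun k => y \in ball e k x) (iota 0 #|T|).
  by rewrite has_find size_iota.
by have := nth_find 0 has_y; rewrite nth_iota // add0n.
Qed.

Lemma dist0 x : dist e x x = 0.
Proof. by apply: dist_eq; rewrite ?inE //; apply/card_gt0P; exists x. Qed.

Lemma card_gt1_neq (x y : T) : x != y -> (1 < #|T|)%N.
Proof. by move=> neq_xy; have := max_card (mem [set x; y]); rewrite cards2 neq_xy. Qed.

Hypothesis e_irr : irreflexive e.

Lemma neq_of_edge x y : e x y -> x != y.
Proof. by apply: contraTneq => ->; rewrite e_irr. Qed.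

Lemma dist1 x y : e x y -> dist e x y = 1.
Proof.
move=> exy; have neq_xy := neq_of_edge exy.
apply: dist_eq; first exact: card_gt1_neq neq_xy.
- by rewrite in_ball1 exy orbT.
- by case=> // _; rewrite inE eq_sym.
Qed.

Lemma dist_eq1 x u : (1 < #|T|)%N -> (dist e x u == 1) = e x u.
Proof.
move=> gt1_T; apply/eqP/idP => [d_xu | /dist1 //].
have := @dist_ball x u; rewrite d_xu in_ball1 => /(_ gt1_T) /orP[/eqP u_x|//].
by move: d_xu; rewrite u_x dist0.
Qed.

Lemma dist2 x y z : x != y -> ~~ e x y -> e x z -> e z y -> dist e x y = 2.
Proof.
move=> neq_xy nexy exz ezy.
apply: dist_eq.
- have := max_card (mem (x |: (y |: [set z]))).
  rewrite !cardsU1 cards1 !inE negb_or neq_xy.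
  by move: (neq_of_edge exz) (neq_of_edge ezy); rewrite [z == y]eq_sym => -> ->.
- by apply: (in_ball2 (u := z)); rewrite // in_ball1 exz orbT.
- case=> [|[|//]] _; first by rewrite inE eq_sym.
  by rewrite in_ball1 negb_or eq_sym neq_xy.
Qed.

End Distance.

Lemma path_exit (T : eqType) (e : rel T) (S : pred T) x p :
  path e x p -> x \in S -> last x p \notin S ->
  exists u z, [/\ u \in S, z \notin S & e u z].
Proof.
elim: p x => [|y p IHp] x /=; first by move=> _ ->.
case/andP=> exy p_y x_S last_S; case y_S: (y \in S); first exact: IHp p_y y_S last_S.
by exists x, y; rewrite y_S.
Qed.

Section DistanceRegular.
Variables (T : finType) (e : rel T) (a b c : nat -> nat).
Hypothesis drg : distance_regular e a b c.

Let e_sym : symmetric e := proj1 (proj1 drg).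
Let e_irr : irreflexive e := proj2 (proj1 drg).
Let e_conn : connected_graph e := proj1 (proj2 drg).
Let e_counts := proj2 (proj2 drg).

Lemma card_nbhd x : #|nbhd e x| = b 0.
Proof.
have [_ _] := e_counts x x; rewrite dist0 => <-; apply: eq_card => u.
by rewrite in_nbhd inE; case exu: (e x u); rewrite ?(dist1 e_irr exu).
Qed.

Lemma card_nbhdI_edge x y : e x y -> #|nbhd e x :&: nbhd e y| = a 1.
Proof.
move=> exy; have [_] := e_counts x y; rewrite (dist1 e_irr exy) => <- _.
apply: eq_card => u; rewrite !(inE, in_nbhd) andbC dist_eq1 //.
exact/card_gt1_neq/(neq_of_edge e_irr exy).
Qed.

Lemma card_nbhdI_dist2 x y : dist e x y = 2 -> #|nbhd e x :&: nbhd e y| = c 2.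
Proof.
move=> d_xy; have [] := e_counts x y; rewrite d_xy => <- _ _.
have neq_xy : x != y by apply/eqP => xy; rewrite xy dist0 in d_xy.
apply: eq_card => u; rewrite !(inE, in_nbhd) andbC eqSS dist_eq1 //.
exact: card_gt1_neq neq_xy.
Qed.

Lemma card_nbhdI_nonedge x y : x != y -> ~~ e x y ->
  (#|nbhd e x :&: nbhd e y| <= c 2)%N.
Proof.
move=> neq_xy nexy; case: (set_0Vmem (nbhd e x :&: nbhd e y)) => [-> | [z]].
  by rewrite cards0.
rewrite !(inE, in_nbhd) => /andP[exz eyz].
by rewrite (card_nbhdI_dist2 (dist2 e_irr neq_xy nexy exz _)) // e_sym.
Qed.

Lemma b1_gt0 : (2 <= diameter e)%N -> (0 < b 1)%N.
Proof.
move=> diam_ge2.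
have /existsP[v /existsP[w d_vw]] : [exists v, [exists w, 1 < dist e v w]].
  apply: contraTT diam_ge2 => /existsPn no_far; rewrite -ltnNge ltnS.
  apply/bigmax_leqP => v _; apply/bigmax_leqP => w _.
  by have /existsPn/(_ w) := no_far v; rewrite -leqNgt.
have neq_vw : v != w by apply/eqP => vw; rewrite vw dist0 in d_vw.
have nevw : ~~ e v w by apply/negP => /(dist1 e_irr) d1; rewrite d1 in d_vw.
(* A path from v to w leaves the closed 1-ball of v along an edge u ~ z,
   and then dist v z = 2. *)
have /connectP[p p_path p_last] := e_conn v w.
have := path_exit (S := [pred u | (u == v) || e v u]) p_path.
rewrite -p_last !inE eqxx negb_or eq_sym neq_vw nevw.
case=> // u [z [u_S z_S euz]].
rewrite !inE negb_or in u_S z_S; case/andP: z_S => neq_zv nevz.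
have evu : e v u by case/orP: u_S => // /eqP u_v; rewrite -u_v euz in nevz.
have [_ _] := e_counts v u; rewrite (dist1 e_irr evu) => <-.
by apply/card_gt0P; exists z; rewrite !inE euz (dist2 e_irr _ nevz evu euz) // eq_sym.
Qed.

Lemma exists_nbhd_dist2 x y : (2 <= diameter e)%N -> e x y ->
  exists2 w, e y w & dist e x w = 2.
Proof.
move=> diam_ge2 exy; have [_ _] := e_counts x y; rewrite (dist1 e_irr exy) => b1_xy.
have /card_gt0P[w] : (0 < #|[set u | e y u & dist e x u == 2]|)%N.
  by rewrite b1_xy b1_gt0.
by rewrite inE => /andP[eyw /eqP]; exists w.
Qed.

Lemma a1_le_c2_nbhdD x y : (2 <= diameter e)%N -> e x y ->
  (a 1 <= c 2 + #|nbhd e y :\: nbhd e x|)%N.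
Proof.
move=> diam_ge2 exy; have [w eyw d_xw] := exists_nbhd_dist2 diam_ge2 exy.
rewrite -(card_nbhdI_edge eyw) -(card_nbhdI_dist2 d_xw).
apply: leq_trans _ (leq_card_setU _ _); apply: subset_leq_card.
apply/subsetP => u; rewrite !(inE, in_nbhd).
by case: (e x u); case: (e y u); case: (e w u).
Qed.

Lemma card_nbhd_symdiff x y : (2 <= diameter e)%N -> x != y ->
  (b 0 <= c 2 + (#|nbhd e x :\: nbhd e y| + #|nbhd e y :\: nbhd e x|))%N.
Proof.
move=> diam_ge2 neq_xy.
have split_x := cardsID (nbhd e y) (nbhd e x); rewrite card_nbhd in split_x.
case exy: (e x y).
- have := a1_le_c2_nbhdD diam_ge2 exy; rewrite card_nbhdI_edge // in split_x.
  lia.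
- have := card_nbhdI_nonedge neq_xy (negbT exy); lia.
Qed.

End DistanceRegular.

Lemma card_nbhd_symdiff_le_moved (T : finType) (e : rel T) (s : {perm T}) x :
  is_automorphism e s ->
  (#|nbhd e x :\: nbhd e (s x)| + #|nbhd e (s x) :\: nbhd e x| <= moved s)%N.
Proof.
move=> s_aut; rewrite -cardsUI.
have -> : (nbhd e x :\: nbhd e (s x)) :&: (nbhd e (s x) :\: nbhd e x) = set0.
  by apply/setP => u; rewrite !(inE, in_nbhd); case: (e x u); case: (e (s x) u).
rewrite cards0 addn0; apply: subset_leq_card; apply/subsetP => u.
rewrite !(inE, in_nbhd); apply: contraL => /eqP s_u.
have -> : e (s x) u = e x u by rewrite -{1}s_u s_aut.
by case: (e x u).
Qed.

Lemma perm_moves (T : finType) (s : {perm T}) : s != 1%g -> exists x, s x != x.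
Proof.
move=> s_ne1; apply/existsP; apply: contraNT s_ne1 => /existsPn s_fix.
by apply/eqP/permP => x; rewrite perm1; apply/eqP/negPn.
Qed.

Local Open Scope ring_scope.

Lemma ler_deficit (R : realFieldType) (g d n k m M : R) :
  0 < d -> g * n < k -> m <= (1 - d) * k -> k <= m + M -> g * d * n <= M.
Proof. by move=> d_gt0 gn_lt_k; nra. Qed.

Theorem corollary4p3 (R : realFieldType) (T : finType) (e : rel T)
    (a b c : nat -> nat) (gamma delta : R) :
  distance_regular e a b c ->
  (2 <= diameter e)%N ->
  0 < gamma -> 0 < delta ->
  gamma * #|T|%:R < (b 0%N)%:R ->
  (c 2%N)%:R <= (1 - delta) * (b 0%N)%:R ->
  forall s : {perm T}, is_automorphism e s -> s != 1%g ->
    gamma * delta * #|T|%:R <= (moved s)%:R.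
Proof.
move=> drg diam_ge2 _ delta_gt0 k_large mu_small s s_aut s_ne1.
have [x] := perm_moves s_ne1; rewrite eq_sym => x_ne_sx.
have k_le : (b 0 <= c 2 + moved s)%N.
  apply: leq_trans (card_nbhd_symdiff drg diam_ge2 x_ne_sx) _.
  by rewrite leq_add2l card_nbhd_symdiff_le_moved.
apply: ler_deficit delta_gt0 k_large mu_small _.
by rewrite -natrD ler_nat.
Qed.
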